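(* Let $(H,+)$ be a nontrivial additive subgroup of $(\mathbb R,+)$, let $r\in\mathbb R$ with $0<r\le\frac12$ or $r\ge2$ such that $rH=H$, and let $C=\langle x\rangle$ be an infinite cyclic group. Let $G=H\rtimes C$ be the semidirect product in which $x$ acts on $H$ by multiplication by $r$, i.e. $xzx^{-1}=rz$ for all $z\in H$. Then for every $t\in H\setminus\{0\}$, the elements $tx$ and $x$ generate a free submonoid of $G$ of rank $2$ (in particular a noncommutative free monoid). *)

From Stdlib Require Import Reals ZArith List.
Open Scope R_scope.

Definition is_add_subgroup (H : R -> Prop) : Prop :=
  H 0 /\ (forall a b, H a -> H b -> H (a + b)) /\ (forall a, H a -> H (- a)).

Definition scaled_eq (r : R) (H : R -> Prop) : Prop :=
  forall y, H y <-> exists z, H z /\ y = r * z.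

(* The semidirect product R ⋊_r <x>, elements (z, n) standing for z x^n,
   with x z x^{-1} = r z, so (a x^m)(b x^n) = (a + r^m b) x^(m+n).
   G = H ⋊ <x> is the subgroup of pairs with first component in H. *)
Definition sdmul (r : R) (p q : R * Z) : R * Z :=
  (fst p + powerRZ r (snd p) * fst q, (snd p + snd q)%Z).

Definition sdone : R * Z := (0, 0%Z).

Fixpoint eval_word (r : R) (g1 g2 : R * Z) (w : list bool) : R * Z :=
  match w with
  | nil => sdone
  | b :: w' => sdmul r (if b then g1 else g2) (eval_word r g1 g2 w')
  end.

Definition free_submonoid2 (r : R) (g1 g2 : R * Z) : Prop :=
  forall w1 w2 : list bool, eval_word r g1 g2 w1 = eval_word r g1 g2 w2 -> w1 = w2.

From Stdlib Require Import Reals ZArith List Lra Lia.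
Open Scope R_scope.

(* In G = R ⋊ <x> a word w = b_0 b_1 ... b_(n-1) over the letters
   tx (true) and x (false) evaluates to (t * (b_0 + b_1 r + ... + b_(n-1) r^(n-1)), n),
   i.e. to t times the value of w read as a 0/1 digit expansion in base r,
   followed by x^n.  Since t <> 0, freeness reduces to uniqueness of 0/1 digit
   expansions of a fixed length in base r, which we prove by induction on the
   leading digit in both regimes:
   - for 0 < r <= 1/2 two expansions of equal length differ by less than 2, so
     a differing leading digit (contributing 1) cannot be compensated by r times
     the difference of the tails;
   - for r >= 2 two distinct expansions of equal length differ by at least 1,
     because r times a difference of size >= 1 swamps a leading digit of size 1. *)

Definition digit (b : bool) : R := if b then 1 else 0.

Fixpoint bval (r : R) (w : list bool) : R :=
  match w with
  | nil => 0
  | b :: w' => digit b + r * bval r w'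
  end.

Definition digits_unique (r : R) : Prop :=
  forall w1 w2, length w1 = length w2 -> bval r w1 = bval r w2 -> w1 = w2.

Lemma eval_word_bval (r t : R) (w : list bool) :
  eval_word r (t, 1%Z) (0, 1%Z) w = (t * bval r w, Z.of_nat (length w)).
Proof.
  induction w as [|b w IH]; cbn [eval_word bval length].
  - unfold sdone; f_equal; ring.
  - rewrite IH, Nat2Z.inj_succ; unfold sdmul.
    destruct b; cbn [fst snd digit]; f_equal; try lia; simpl powerRZ; ring.
Qed.

Lemma digit_diff_le (b b' : bool) : Rabs (digit b - digit b') <= 1.
Proof.
  destruct b, b'; unfold digit;
    [rewrite Rminus_diag | rewrite Rminus_0_r | rewrite Rminus_0_l, Rabs_Ropp
    | rewrite Rminus_diag]; rewrite ?Rabs_R0, ?Rabs_R1; lra.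
Qed.

Lemma digit_diff_neq (b b' : bool) : b <> b' -> Rabs (digit b - digit b') = 1.
Proof.
  destruct b, b'; intro Hneq; try congruence; unfold digit;
    [rewrite Rminus_0_r | rewrite Rminus_0_l, Rabs_Ropp]; apply Rabs_R1.
Qed.

Lemma bval_cons_diff (r : R) (b b' : bool) (w w' : list bool) :
  bval r (b :: w) - bval r (b' :: w') =
  (digit b - digit b') + r * (bval r w - bval r w').
Proof. simpl; ring. Qed.

Section SmallBase.

Variable r : R.
Hypothesis r_small : 0 < r <= 1/2.

Lemma bval_diff_lt_2 (w1 w2 : list bool) :
  length w1 = length w2 -> Rabs (bval r w1 - bval r w2) < 2.
Proof.
  revert w2; induction w1 as [|b w1 IH]; intros [|b' w2] Hlen;
    simpl in Hlen; try discriminate.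
  - simpl; rewrite Rminus_diag, Rabs_R0; lra.
  - injection Hlen as Hlen.
    rewrite bval_cons_diff.
    pose proof (IH _ Hlen) as Htail; pose proof (digit_diff_le b b').
    eapply Rle_lt_trans; [apply Rabs_triang|].
    rewrite Rabs_mult, (Rabs_right r) by lra.
    nra.
Qed.

Lemma digits_unique_small : digits_unique r.
Proof.
  intro w1; induction w1 as [|b w1 IH]; intros [|b' w2] Hlen Hval;
    simpl in Hlen; try discriminate; [reflexivity|].
  injection Hlen as Hlen.
  pose proof (bval_cons_diff r b b' w1 w2) as Hdiff.
  rewrite Hval, Rminus_diag in Hdiff.
  destruct (Bool.bool_dec b b') as [<-|Hneq].
  -
    f_equal; apply IH; [exact Hlen|].
    rewrite Rminus_diag in Hdiff; nra.
  - (* distinct leading digits: 1 = r * |tail difference| < 2r <= 1 *)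
    exfalso.
    pose proof (digit_diff_neq b b' Hneq) as Hhead.
    pose proof (bval_diff_lt_2 w1 w2 Hlen) as Htail.
    replace (digit b - digit b') with (- (r * (bval r w1 - bval r w2))) in Hhead
      by lra.
    rewrite Rabs_Ropp, Rabs_mult, (Rabs_right r) in Hhead by lra.
    nra.
Qed.

End SmallBase.

Section LargeBase.

Variable r : R.
Hypothesis r_large : r >= 2.

Lemma bval_separated (w1 w2 : list bool) :
  length w1 = length w2 -> w1 = w2 \/ 1 <= Rabs (bval r w1 - bval r w2).
Proof.
  revert w2; induction w1 as [|b w1 IH]; intros [|b' w2] Hlen;
    simpl in Hlen; try discriminate; [now left|].
  injection Hlen as Hlen.
  rewrite bval_cons_diff.
  destruct (IH _ Hlen) as [<-|Htail].
  -
    rewrite Rminus_diag, Rmult_0_r, Rplus_0_r.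
    destruct (Bool.bool_dec b b') as [<-|Hneq]; [now left|].
    right; rewrite digit_diff_neq by exact Hneq; lra.
  - (* distinct tails: r * |tail difference| >= 2 outweighs the leading digits *)
    right.
    pose proof (digit_diff_le b b') as Hhead.
    pose proof (Rabs_triang_inv (r * (bval r w1 - bval r w2)) (- (digit b - digit b')))
      as Htri.
    rewrite Rabs_Ropp, Rabs_mult, (Rabs_right r) in Htri by lra.
    replace (r * (bval r w1 - bval r w2) - - (digit b - digit b'))
      with (digit b - digit b' + r * (bval r w1 - bval r w2)) in Htri by ring.
    nra.
Qed.

Lemma digits_unique_large : digits_unique r.
Proof.
  intros w1 w2 Hlen Hval.
  destruct (bval_separated w1 w2 Hlen) as [Heq|Hsep]; [exact Heq|].
  rewrite Hval, Rminus_diag, Rabs_R0 in Hsep; lra.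
Qed.

End LargeBase.

Lemma free_of_digits_unique (r t : R) :
  digits_unique r -> t <> 0 -> free_submonoid2 r (t, 1%Z) (0, 1%Z).
Proof.
  intros Huniq Ht w1 w2 Heval.
  rewrite !eval_word_bval in Heval.
  injection Heval as Hval Hlen.
  apply Huniq.
  - now apply Nat2Z.inj.
  - now apply Rmult_eq_reg_l with t.
Qed.

Theorem lemma3p7 (H : R -> Prop) (r : R) (t : R) :
  is_add_subgroup H ->
  (exists h, H h /\ h <> 0) ->
  ((0 < r /\ r <= 1/2) \/ r >= 2) ->
  scaled_eq r H ->
  H t -> t <> 0 ->
  free_submonoid2 r (t, 1%Z) (0, 1%Z).
Proof.
  intros _ _ Hr _ _ Ht.
  apply free_of_digits_unique; [|exact Ht].
  destruct Hr as [Hsmall|Hlarge].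
  - exact (digits_unique_small r Hsmall).
  - exact (digits_unique_large r Hlarge).
Qed.
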